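(* Let $f\in\mathcal H$, $f\neq 0$, and let $d=\operatorname{ord}_0(f)$. Then $f$ is $\mathcal H$-inner if and only if $f=c\,\Pi_{[f]}\big(k_0^{(d)}\big)$ for some nonzero constant $c\in\mathbb C$. Moreover, $\Pi_{[f]}\big(k_0^{(d)}\big)$ is always an $\mathcal H$-inner function.
   Context: Standing assumptions: $\Omega\subset\mathbb C$ is a domain with $0\in\Omega$, and $\mathcal H$ is a Hilbert space of analytic functions on $\Omega$ in which every point evaluation $f\mapsto f(w)$, $w\in\Omega$, is bounded (a reproducing kernel Hilbert space); the shift $S$, $(Sf)(z)=zf(z)$, is a bounded operator on $\mathcal H$; and the analytic polynomials $\mathcal P$ are dense in $\mathcal H$. For $w\in\Omega$ and $m\ge 0$, $k_w^{(m)}$ denotes the unique element of $\mathcal H$ with $\langle f,k_w^{(m)}\rangle=f^{(m)}(w)$ for all $f\in\mathcal H$, and $k_w=k_w^{(0)}$. For $f\in\mathcal H$, $[f]$ denotes the closure in $\mathcal H$ of $\operatorname{span}\{z^kf:k\ge0\}$. For a closed subspace $V$, $\Pi_V$ is the orthogonal projection onto $V$. $\operatorname{ord}_0(f)$ is the order of the zero of $f$ at $0$. A function $f\in\mathcal H\setminus\{0\}$ is called $\mathcal H$-inner if $\langle f,z^kf\rangle=0$ for all integers $k\ge1$ (no normalization required). *)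

From HB Require Import structures.
From mathcomp Require Import all_boot all_order all_algebra.
From mathcomp Require Import all_classical all_reals all_analysis.
From mathcomp Require Import complex.
Import Order.TTheory GRing.Theory Num.Theory.
Import numFieldNormedType.Exports.
Set Implicit Arguments.
Unset Strict Implicit.
Unset Printing Implicit Defensive.
Local Open Scope ring_scope.
Local Open Scope classical_set_scope.

(* The complex numbers over a real type R, seen as a numClosedFieldType so that
   MathComp-Analysis equips it with its norm topology (|z| = complex modulus),
   so that [derive1n] is the complex derivative. *)
Definition Cx (R : realType) : numClosedFieldType := R[i].

Definition is_inner_product (R : realType) (V : lmodType (Cx R))
    (ip : V -> V -> Cx R) : Prop :=
  (forall (a : Cx R) (f g h : V), ip (a *: f + g) h = a * ip f h + ip g h) /\
  (forall f g : V, ip g f = (ip f g)^*) /\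
  (forall f : V, 0 <= ip f f) /\
  (forall f : V, ip f f = 0 -> f = 0).

Definition hnorm (R : realType) (V : lmodType (Cx R)) (ip : V -> V -> Cx R)
    (f : V) : R :=
  Num.sqrt (complex.Re (ip f f)).

Definition hcomplete (R : realType) (V : lmodType (Cx R))
    (ip : V -> V -> Cx R) : Prop :=
  forall u : nat -> V,
    (forall e : R, 0 < e -> exists N : nat, forall m n : nat,
        (N <= m)%N -> (N <= n)%N -> hnorm ip (u m - u n) < e) ->
    exists l : V, forall e : R, 0 < e -> exists N : nat, forall n : nat,
        (N <= n)%N -> hnorm ip (u n - l) < e.

Definition hclosure (R : realType) (V : lmodType (Cx R))
    (ip : V -> V -> Cx R) (A : set V) : set V :=
  [set x | forall e : R, 0 < e -> exists2 a, A a & hnorm ip (x - a) < e].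

Definition is_proj (R : realType) (V : lmodType (Cx R))
    (ip : V -> V -> Cx R) (A : set V) (x p : V) : Prop :=
  A p /\ (forall v : V, A v -> ip (x - p) v = 0).

Definition hproj (R : realType) (V : lmodType (Cx R))
    (ip : V -> V -> Cx R) (A : set V) (x : V) : V :=
  xget 0 [set p | is_proj ip A x p].

Definition analytic_on (R : realType) (Om : set (Cx R)) (g : Cx R -> Cx R)
    : Prop :=
  forall w : Cx R, Om w -> exists r : Cx R, 0 < r /\
    exists a : nat -> Cx R, forall z : Cx R, `|z - w| < r ->
      (fun n : nat => \sum_(k < n) a k * (z - w) ^+ k) @ \oo --> g z.

Definition is_ord0 (R : realType) (g : Cx R -> Cx R) (d : nat) : Prop :=
  derive1n d g 0 != 0 /\ (forall n : nat, (n < d)%N -> derive1n n g 0 = 0).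

(* ---------- the standing assumptions ----------
   H is modelled as a complex vector space V with inner product ip, together
   with the map ev : V -> (C -> C) sending an element to the analytic function
   it is (only its values on Om matter); S is the shift. *)
Record standing_assumptions (R : realType) (Om : set (Cx R))
    (V : lmodType (Cx R)) (ip : V -> V -> Cx R) (ev : V -> Cx R -> Cx R)
    (S : V -> V) : Prop := {
  sa_open : open Om;
  sa_connected : connected Om;
  sa_zero : Om 0;
  sa_inner : is_inner_product ip;
  sa_complete : hcomplete ip;
  sa_ev_linear : forall (a : Cx R) (f g : V) (z : Cx R), Om z ->
      ev (a *: f + g) z = a * ev f z + ev g z;
  sa_ev_inj : forall f g : V, (forall z, Om z -> ev f z = ev g z) -> f = g;
  sa_analytic : forall f : V, analytic_on Om (ev f);
  sa_eval_bounded : forall w : Cx R, Om w -> exists M : R, forall f : V,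
      Normc.normc (ev f w) <= M * hnorm ip f;
  sa_shift : forall (f : V) (z : Cx R), Om z -> ev (S f) z = z * ev f z;
  sa_shift_linear : forall (a : Cx R) (f g : V), S (a *: f + g) = a *: S f + S g;
  sa_shift_bounded : exists M : R, forall f : V, hnorm ip (S f) <= M * hnorm ip f;
  sa_poly_in : forall p : {poly Cx R}, exists g : V,
      forall z, Om z -> ev g z = p.[z];
  sa_poly_dense : forall f : V, hclosure ip
      [set g | exists p : {poly Cx R}, forall z, Om z -> ev g z = p.[z]] f;
  (* the elements k_w^{(m)} (presupposed by the paper's notation) exist *)
  sa_kernels : forall (w : Cx R), Om w -> forall m : nat, exists k : V,
      forall f : V, ip f k = derive1n m (ev f) w
}.

Definition kernel_deriv (R : realType) (V : lmodType (Cx R))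
    (ip : V -> V -> Cx R) (ev : V -> Cx R -> Cx R) (w : Cx R) (m : nat) : V :=
  xget 0 [set k | forall f : V, ip f k = derive1n m (ev f) w].

Definition cyclic_subspace (R : realType) (V : lmodType (Cx R))
    (ip : V -> V -> Cx R) (S : V -> V) (f : V) : set V :=
  hclosure ip [set g | exists (n : nat) (c : nat -> Cx R),
                        g = \sum_(k < n) c k *: iter k S f].

Definition H_inner (R : realType) (V : lmodType (Cx R))
    (ip : V -> V -> Cx R) (S : V -> V) (f : V) : Prop :=
  f <> 0 /\ (forall k : nat, (1 <= k)%N -> ip f (iter k S f) = 0).

From HB Require Import structures.
From mathcomp Require Import all_boot all_order all_algebra.
From mathcomp Require Import all_classical all_reals all_analysis.
From mathcomp Require Import complex.
From mathcomp Require Import ring lra.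
Import Order.TTheory GRing.Theory Num.Theory.
Import numFieldNormedType.Exports.
Local Open Scope ring_scope.
Local Open Scope classical_set_scope.

Set Implicit Arguments. Unset Strict Implicit.

(* Write K m for k_0^{(m)}, so that <g, K m> = g^{(m)}(0), and P for the
   projection of K d onto [f].  The proof rests on a Leibniz rule for the shift,
     <S g, K (n+1)> = (n+1) <g, K n>,
   which is a computation for polynomials and extends to all of H because both
   sides are bounded linear functionals and polynomials are dense.  Hence if g
   vanishes to order m at 0 (<g, K j> = 0 for j < m), S^k g vanishes to order
   m + k, and vanishing to order m passes to spans and norm limits.  As f
   vanishes to order d, so does all of [f]; thus <v, P> = <v, K d> for v in [f]
   and <S^k P, P> = <S^k P, K d> = 0 for k >= 1: P is inner.  If f is inner,
   w = f - beta P with <f, w> = 0 is orthogonal to every S^k f, hence to [f],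
   while w lies in [f]; so w = 0.  Conversely nonzero multiples of P are inner. *)

Section InnerProductAlgebra.
Variables (R : realType) (V : lmodType (Cx R)) (ip : V -> V -> Cx R).
Hypothesis ip_inner : is_inner_product ip.

Lemma ipDZl a f g h : ip (a *: f + g) h = a * ip f h + ip g h.
Proof. by case: ip_inner. Qed.
Lemma ipC f g : ip g f = (ip f g)^*.
Proof. by case: ip_inner => _ []. Qed.
Lemma ip_ge0 f : 0 <= ip f f.
Proof. by case: ip_inner => _ [_ []]. Qed.
Lemma ip_eq0 f : ip f f = 0 -> f = 0.
Proof. by case: ip_inner => _ [_ [_]]; apply. Qed.

Lemma ipDl f g h : ip (f + g) h = ip f h + ip g h.
Proof. by rewrite -[f in LHS]scale1r ipDZl mul1r. Qed.
Lemma ip0l h : ip 0 h = 0.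
Proof. by apply/eqP; rewrite -[X in X == _](addrK (ip 0 h)) -ipDl addr0 subrr. Qed.
Lemma ipZl a f h : ip (a *: f) h = a * ip f h.
Proof. by rewrite -[a *: f]addr0 ipDZl ip0l addr0. Qed.
Lemma ipNl f h : ip (- f) h = - ip f h.
Proof. by rewrite -scaleN1r ipZl mulN1r. Qed.
Lemma ipBl f g h : ip (f - g) h = ip f h - ip g h.
Proof. by rewrite ipDl ipNl. Qed.
Lemma ip0r h : ip h 0 = 0.
Proof. by rewrite ipC ip0l conjC0. Qed.
Lemma ipDr f g h : ip h (f + g) = ip h f + ip h g.
Proof. by rewrite ipC ipDl rmorphD (ipC f) (ipC g). Qed.
Lemma ipZr a f h : ip h (a *: f) = a^* * ip h f.
Proof. by rewrite ipC ipZl rmorphM (ipC f). Qed.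
Lemma ipNr f h : ip h (- f) = - ip h f.
Proof. by rewrite ipC ipNl rmorphN (ipC f). Qed.
Lemma ipBr f g h : ip h (f - g) = ip h f - ip h g.
Proof. by rewrite ipDr ipNr. Qed.

Lemma ip_suml n (c : nat -> Cx R) (g : nat -> V) h :
  ip (\sum_(k < n) c k *: g k) h = \sum_(k < n) c k * ip (g k) h.
Proof.
elim: n => [|n IH]; first by rewrite !big_ord0 ip0l.
by rewrite !big_ord_recr /= ipDl IH ipZl.
Qed.

Lemma ip_subZ u v t : ip (u - t *: v) (u - t *: v) =
  ip u u - t^* * ip u v - t * (ip u v)^* + t * t^* * ip v v.
Proof. by rewrite ipBl !ipBr !ipZl !ipZr (ipC v u) conjCK; ring. Qed.

Lemma cauchy_schwarzC f g : ip f g * (ip f g)^* <= ip f f * ip g g.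
Proof.
have [B0|Bn0] := eqVneq (ip g g) 0.
  by rewrite (ip_eq0 B0) !ip0r mul0r mulr0.
set a := ip f g; set B := ip g g.
have Bp : 0 < B by rewrite lt_def Bn0 ip_ge0.
have Breal : B^* = B by apply/conj_Creal/ger0_real/ip_ge0.
have := ip_ge0 (f - (a / B) *: g).
rewrite ip_subZ rmorphM fmorphV /= Breal -/a -/B.
have -> : ip f f - a^* / B * a - a / B * a^* + a / B * (a^* / B) * B
  = ip f f - a * a^* / B by field.
by rewrite subr_ge0 ler_pdivrMr.
Qed.
End InnerProductAlgebra.

Section ComplexModulus.
Variable R : realType.
Implicit Types (z : Cx R) (x : R).

Lemma normc_ge0 z : 0 <= Normc.normc z.
Proof. by case: z => a b; apply: sqrtr_ge0. Qed.

Lemma normc_gt0 z : z != 0 -> 0 < Normc.normc z.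
Proof.
move=> z0; rewrite lt_def normc_ge0 andbT; apply/eqP => /Normc.eq0_normc.
by move/eqP: z0.
Qed.

Lemma normcB_le (a b : Cx R) : Normc.normc (a - b) <= Normc.normc a + Normc.normc b.
Proof. by rewrite -(complex.normcN b); apply: le_normcD. Qed.

Lemma mulC_conj z : z * z^* = ((Normc.normc z) ^+ 2)%:C%C.
Proof.
rewrite -normCK.
have -> : `|z| = (Normc.normc z)%:C%C by case: z => a b; rewrite normc_def.
by rewrite -rmorphXn.
Qed.

Lemma ge0_complexRe z : 0 <= z -> z = (complex.Re z)%:C%C.
Proof. by move=> z0; rewrite [LHS]complexE (ger0_Im z0) mulr0 addr0. Qed.

Lemma ge0_Re z : 0 <= z -> 0 <= complex.Re z.
Proof. by move=> z0; rewrite -(@ler0c R) -ge0_complexRe. Qed.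

Lemma conj_realM x z : ((x%:C)%C * z)^* = (x%:C)%C * z^*.
Proof. by rewrite rmorphM; congr (_ * _); apply/conj_Creal/complex_realP; exists x. Qed.

Lemma eq0_of_close_to_null (z : Cx R) (u : nat -> Cx R) :
  (forall e : R, 0 < e -> exists N, forall n, (N <= n)%N -> Normc.normc (u n) < e) ->
  (forall e : R, 0 < e -> exists N, forall n, (N <= n)%N -> Normc.normc (z - u n) < e) ->
  z = 0.
Proof.
move=> u_small zu_close; apply/eqP/negPn/negP => /normc_gt0 z_gt0.
have e_gt0 : 0 < Normc.normc z / 2 by rewrite divr_gt0.
have [N1 HN1] := u_small _ e_gt0; have [N2 HN2] := zu_close _ e_gt0.
have h1 := HN1 (maxn N1 N2) (leq_maxl _ _).
have h2 := HN2 (maxn N1 N2) (leq_maxr _ _).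
have := le_normcD (z - u (maxn N1 N2)) (u (maxn N1 N2)); rewrite subrK.
lra.
Qed.
End ComplexModulus.

Section RealFacts.
Variable R : realType.

Lemma eventually_lt_div (c e : R) : 0 < e ->
  exists N : nat, forall n, (N <= n)%N -> c / n.+1%:R < e.
Proof.
move=> e0; exists (Num.truncn (c / e)) => n Nn.
have h : c / e < n.+1%:R.
  by apply: lt_le_trans (truncnS_gt _) _; rewrite ler_nat ltnS.
by rewrite ltr_pdivrMr // mulrC -ltr_pdivrMr.
Qed.

Lemma lt_sqr (a e : R) : 0 <= a -> 0 < e -> (a < e) = (a ^+ 2 < e ^+ 2).
Proof. by move=> a0 e0; rewrite ltr_pXn2r // ?nnegrE // ltW. Qed.
End RealFacts.

Section HilbertNorm.
Variables (R : realType) (V : lmodType (Cx R)) (ip : V -> V -> Cx R).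
Hypothesis ip_inner : is_inner_product ip.
Local Notation sqn u := (complex.Re (ip u u)).

Lemma ip_sqn f : ip f f = (sqn f)%:C%C.
Proof. exact/ge0_complexRe/(ip_ge0 ip_inner). Qed.
Lemma sqn_ge0 f : 0 <= sqn f.
Proof. exact/ge0_Re/(ip_ge0 ip_inner). Qed.
Lemma hnorm_ge0 f : 0 <= hnorm ip f.
Proof. exact: sqrtr_ge0. Qed.
Lemma hnorm_sq f : hnorm ip f ^+ 2 = sqn f.
Proof. by rewrite /hnorm sqr_sqrtr // sqn_ge0. Qed.
Lemma hnorm_lt u e : 0 < e -> (hnorm ip u < e) = (sqn u < e ^+ 2).
Proof. by move=> e0; rewrite lt_sqr // ?hnorm_sq // hnorm_ge0. Qed.
Lemma sqnN u : sqn (- u) = sqn u.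
Proof. by rewrite (ipNl ip_inner) (ipNr ip_inner) opprK. Qed.
Lemma hnormB_sym u w : hnorm ip (u - w) = hnorm ip (w - u).
Proof. by rewrite /hnorm -sqnN opprB. Qed.

Lemma cauchy_schwarz f g : Normc.normc (ip f g) <= hnorm ip f * hnorm ip g.
Proof.
have := cauchy_schwarzC ip_inner f g.
rewrite mulC_conj (ip_sqn f) (ip_sqn g) -rmorphM lecR /= -!hnorm_sq -exprMn.
rewrite ler_pXn2r ?nnegrE ?normc_ge0 //.
by rewrite mulr_ge0 // hnorm_ge0.
Qed.

Lemma parallelogram u w : sqn (u + w) + sqn (u - w) = 2 * sqn u + 2 * sqn w.
Proof.
apply: (@complexI R); rewrite !rmorphD !rmorphM /= -!ip_sqn.
rewrite (ipBl ip_inner) !(ipBr ip_inner) !(ipDl ip_inner) !(ipDr ip_inner).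
by rewrite (rmorph_nat (real_complex R) 2); ring.
Qed.

Lemma sqn_double u : sqn (2 *: u) = 4 * sqn u.
Proof.
apply: (@complexI R); rewrite !rmorphM /= -!ip_sqn.
rewrite (ipZl ip_inner) (ipZr ip_inner) conjC_nat.
by rewrite (rmorph_nat (real_complex R) 4); ring.
Qed.

(* If w is within e of minimising the distance sqn (w - t v) over all t, then
   <w,v> is small: first variation of the distance function. *)
Lemma almost_minimal_orth (w v : V) (d e : R) :
  (forall t : Cx R, d <= sqn (w - t *: v)) -> sqn w < d + e ->
  Normc.normc (ip w v) ^+ 2 < e * (1 + sqn v).
Proof.
move=> Hd Hw.
set b := ip w v; set be := Normc.normc b ^+ 2; set Nv := sqn v.
have Nv0 : 0 <= Nv by apply: sqn_ge0.
have be0 : 0 <= be by rewrite /be sqr_ge0.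
set s := (1 + Nv)^-1.
have s1 : s * (1 + Nv) = 1 by rewrite /s mulVf // gt_eqF // ltr_wpDr.
have s0 : 0 < s by rewrite /s invr_gt0 ltr_wpDr.
have E : sqn (w - ((s%:C)%C * b) *: v) = sqn w - 2 * s * be + s ^+ 2 * be * Nv.
  apply: (@complexI R).
  rewrite -ip_sqn (ip_subZ ip_inner) conj_realM -/b (ip_sqn w) (ip_sqn v) -/Nv.
  have bb : b * b^* = (Normc.normc b)%:C%C * (Normc.normc b)%:C%C.
    by rewrite mulC_conj -rmorphM expr2.
  rewrite !rmorphD !rmorphN !rmorphM /= (rmorph_nat (real_complex R) 2) -bb.
  by ring.
have := Hd ((s%:C)%C * b); rewrite E => H1.
have H3 : (2 * s * be - s ^+ 2 * be * Nv) * (1 + Nv) = be + s * be.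
  have sNv : s * Nv = 1 - s by rewrite -s1; ring.
  have -> : (2 * s * be - s ^+ 2 * be * Nv) * (1 + Nv)
      = (s * (1 + Nv)) * (2 * be - (s * Nv) * be) by ring.
  by rewrite s1 sNv; ring.
have H4 : (2 * s * be - s ^+ 2 * be * Nv) * (1 + Nv) < e * (1 + Nv).
  by rewrite ltr_pM2r ?ltr_wpDr //; lra.
have : 0 <= s * be by rewrite mulr_ge0 // ltW.
lra.
Qed.
End HilbertNorm.

Section Closure.
Variables (R : realType) (V : lmodType (Cx R)) (ip : V -> V -> Cx R).
Hypothesis ip_inner : is_inner_product ip.

Lemma subset_hclosure (D : set V) v : D v -> hclosure ip D v.
Proof.
move=> Dv e e0; exists v => //.
by rewrite subrr /hnorm (ip0l ip_inner) /= sqrtr0.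
Qed.

Lemma bounded_functional_closure (Phi : V -> Cx R) (D : set V) (C : R) :
  (forall a u w, Phi (a *: u + w) = a * Phi u + Phi w) ->
  (forall v, Normc.normc (Phi v) <= C * hnorm ip v) ->
  (forall v, D v -> Phi v = 0) -> forall l, hclosure ip D l -> Phi l = 0.
Proof.
move=> Phi_lin Phi_bnd Phi_D l Dl.
have PhiB u w : Phi (u - w) = Phi u - Phi w.
  by rewrite addrC -scaleN1r Phi_lin mulN1r addrC.
apply/eqP/negPn/negP => /normc_gt0 Phil_gt0.
have [C_le0|C_gt0] := leP C 0.
  have := Phi_bnd l; have : C * hnorm ip l <= 0.
    by rewrite mulr_le0_ge0 // hnorm_ge0.
  lra.
have [a Da Ha] := Dl _ (divr_gt0 Phil_gt0 C_gt0).
have := Phi_bnd (l - a); rewrite PhiB (Phi_D _ Da) subr0.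
have : C * hnorm ip (l - a) < Normc.normc (Phi l).
  by rewrite -[X in _ < X](divfK (lt0r_neq0 C_gt0)) mulrC ltr_pM2r.
lra.
Qed.

Lemma ip_closure_eq0 (D : set V) (h : V) :
  (forall v, D v -> ip v h = 0) -> forall l, hclosure ip D l -> ip l h = 0.
Proof.
move=> Dh; apply: (bounded_functional_closure (C := hnorm ip h)) => //.
  by move=> a u w; apply: ipDZl.
by move=> u; rewrite mulrC; apply: cauchy_schwarz.
Qed.
End Closure.

Section Projection.
Variables (R : realType) (V : lmodType (Cx R)) (ip : V -> V -> Cx R).
Hypothesis ip_inner : is_inner_product ip.
Hypothesis ip_complete : hcomplete ip.
Local Notation sqn u := (complex.Re (ip u u)).

Variables (D : set V) (x : V).
Hypothesis D0 : D 0.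
Hypothesis D_lin : forall (c : Cx R) u w, D u -> D w -> D (c *: u + w).

Let dists := [set r : R | exists2 a, D a & r = sqn (x - a)].
Let dists_inf : has_inf dists.
Proof.
split; first by exists (sqn (x - 0)); exists 0.
by exists 0 => r [a _ ->]; apply: sqn_ge0.
Qed.

Let dist2 := inf dists.

Let dist2_le a : D a -> dist2 <= sqn (x - a).
Proof. by move=> Da; apply: (ge_inf (proj2 dists_inf)); exists a. Qed.

Definition minimizing (a : nat -> V) :=
  forall n, D (a n) /\ sqn (x - a n) < dist2 + (n.+1%:R)^-1.

Lemma minimizing_exists : exists a, minimizing a.
Proof.
have close n : exists a, D a /\ sqn (x - a) < dist2 + (n.+1%:R)^-1.
  have n_gt0 : 0 < (n.+1%:R : R)^-1 by rewrite invr_gt0.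
  by have [r [a Da ->] lt] := inf_adherent n_gt0 dists_inf; exists a.
by have [a Ha] := choice close; exists a.
Qed.

(* The midpoint of a m and a n lies in D, so the parallelogram law bounds
   their distance. *)
Lemma minimizing_cauchy a : minimizing a ->
  forall m n, sqn (a m - a n) <= 2 * (m.+1%:R)^-1 + 2 * (n.+1%:R)^-1.
Proof.
move=> Ha m n; have [Dm xm] := Ha m; have [Dn xn] := Ha n.
have := parallelogram ip_inner (x - a n) (x - a m).
have -> : x - a n - (x - a m) = a m - a n by rewrite opprB addrC addrA subrK.
have -> : x - a n + (x - a m) = 2 *: (x - ((2 : Cx R)^-1 *: a n + ((2 : Cx R)^-1 *: a m + 0))).
  rewrite addr0 scalerBr scalerDr !scalerA mulfV ?pnatr_eq0 // !scale1r.
  by rewrite scaler_nat mulr2n opprD !addrA; congr (_ - _); rewrite addrAC.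
rewrite sqn_double //.
have := dist2_le (D_lin (2 : Cx R)^-1 Dn (D_lin (2 : Cx R)^-1 Dm D0)).
move: xm xn; move: (sqn (x - (_ + _))) (sqn (a m - a n)) (sqn (x - a m)).
move: (sqn (x - a n)) dist2 (m.+1%:R^-1 : R) (n.+1%:R^-1 : R) => *; lra.
Qed.

Lemma minimizing_converges a : minimizing a ->
  exists p, forall e, 0 < e -> exists N, forall n, (N <= n)%N -> hnorm ip (a n - p) < e.
Proof.
move=> Ha; apply: ip_complete => e e0.
have [N HN] := eventually_lt_div 4 (exprn_gt0 2 e0).
exists N => m n Nm Nn; rewrite hnorm_lt //.
have im : (m.+1%:R : R)^-1 <= (N.+1%:R)^-1 by rewrite lef_pV2 ?posrE // ler_nat ltnS.
have iN : (n.+1%:R : R)^-1 <= (N.+1%:R)^-1 by rewrite lef_pV2 ?posrE // ler_nat ltnS.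
have := HN N (leqnn N); have := minimizing_cauchy Ha m n; move: im iN.
by move: (sqn _) (e ^+ 2) (m.+1%:R^-1 : R) (n.+1%:R^-1 : R) (N.+1%:R^-1 : R) => *; lra.
Qed.

Lemma minimizing_limit_orth a p : minimizing a ->
  (forall e, 0 < e -> exists N, forall n, (N <= n)%N -> hnorm ip (a n - p) < e) ->
  forall v, D v -> ip (x - p) v = 0.
Proof.
move=> Ha a_to_p v Dv.
apply: (eq0_of_close_to_null (u := fun n => ip (x - a n) v)) => e e0.
- have [N HN] := eventually_lt_div (1 + sqn v) (exprn_gt0 2 e0).
  exists N => n Nn; rewrite lt_sqr ?normc_ge0 //.
  apply: lt_trans (HN n Nn); rewrite mulrC.
  apply: (almost_minimal_orth ip_inner _ (proj2 (Ha n))) => t.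
  by have := dist2_le (D_lin t Dv (proj1 (Ha n))); rewrite opprD addrA addrAC.
- have hv_gt0 : 0 < hnorm ip v + 1 by rewrite ltr_wpDl ?hnorm_ge0.
  have [N HN] := a_to_p _ (divr_gt0 e0 hv_gt0); exists N => n Nn.
  rewrite -(ipBl ip_inner) opprB addrC addrA subrK.
  apply: le_lt_trans (cauchy_schwarz ip_inner _ _) _.
  apply: le_lt_trans (_ : _ <= e / (hnorm ip v + 1) * hnorm ip v) _.
    by rewrite ler_wpM2r ?hnorm_ge0 // ltW ?HN.
  by rewrite -[X in _ < X](divfK (lt0r_neq0 hv_gt0)) ltr_pM2l ?divr_gt0 // ltrDl.
Qed.

Lemma projection_exists : exists p, is_proj ip (hclosure ip D) x p.
Proof.
have [a Ha] := minimizing_exists.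
have [p a_to_p] := minimizing_converges Ha.
exists p; split.
  move=> e e0; have [N HN] := a_to_p e e0; exists (a N); first exact: (proj1 (Ha N)).
  by rewrite (hnormB_sym ip_inner); apply: HN.
move=> v Dv; rewrite (ipC ip_inner) (ip_closure_eq0 ip_inner _ Dv) ?conjC0 //.
by move=> u Du; rewrite (ipC ip_inner) (minimizing_limit_orth Ha a_to_p Du) conjC0.
Qed.
End Projection.

Lemma is_proj_ip (R : realType) (V : lmodType (Cx R)) (ip : V -> V -> Cx R)
    (A : set V) (x p v : V) :
  is_inner_product ip -> is_proj ip A x p -> A v -> ip v p = ip v x.
Proof.
move=> ip_inner [_ orth] Av; have := orth v Av.
rewrite (ipBl ip_inner) => /eqP; rewrite subr_eq0 => /eqP e.
by rewrite (ipC ip_inner p v) -e -(ipC ip_inner).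
Qed.

Section PolynomialDerivatives.
Variable K : numFieldType.

Lemma is_derive_horner (p : {poly K}) (x : K) : is_derive x 1 (horner p) p^`().[x].
Proof.
elim/poly_ind: p x => [|p c IH] x.
  have -> : horner (0 : {poly K}) = cst 0 by apply/funext => y; rewrite horner0.
  by rewrite deriv0 horner0; apply: is_derive_cst.
have -> : horner (p * 'X + c%:P) = horner p * id + cst c.
  by apply/funext => y; rewrite !hornerE.
apply: is_derive_eq.
rewrite derivD derivC addr0 derivM derivX !hornerE /=.
by rewrite addrC mulrC; congr (_ + _); rewrite /GRing.scale /= ?mulr1.
Qed.

Lemma derive1n_horner (n : nat) (p : {poly K}) :
  derive1n n (horner p) = horner (p^`(n))%R.
Proof.
elim: n => // n IH; rewrite derive1nS IH derivnS.
by apply/funext => x; rewrite derive1E; case: (is_derive_horner (p^`(n))%R x).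
Qed.

Lemma derive1n_horner0 (n : nat) (p : {poly K}) :
  derive1n n (horner p) 0 = p`_n *+ n`!.
Proof. by rewrite derive1n_horner horner_coef0 coef_derivn addn0 ffactnn. Qed.

Lemma derive1n_open_eq (U : set K) (f g : K -> K) : open U ->
  (forall z, U z -> f z = g z) -> forall n z, U z -> derive1n n f z = derive1n n g z.
Proof.
move=> U_open fg n; elim: n => [|n IH] z Uz; first exact: fg.
rewrite !derive1nS !derive1E; apply: near_eq_derive.
by apply: filterS (open_nbhs_nbhs (conj U_open Uz)) => y /IH.
Qed.
End PolynomialDerivatives.

Section StandingAssumptions.
Variables (R : realType) (Om : set (Cx R)) (V : lmodType (Cx R))
    (ip : V -> V -> Cx R) (ev : V -> Cx R -> Cx R) (S : V -> V).
Hypothesis SA : standing_assumptions Om ip ev S.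

Let ip_inner := sa_inner SA.
Local Notation K m := (kernel_deriv ip ev 0 m).

Lemma kernel_derivE m g : ip g (K m) = derive1n m (ev g) 0.
Proof.
have := @xgetPex _ 0 [set k | forall f : V, ip f k = derive1n m (ev f) 0].
by move=> /(_ (sa_kernels SA (sa_zero SA) m)); apply.
Qed.

Lemma shift0 : S 0 = 0.
Proof.
have := sa_shift_linear SA 1 0 0; rewrite !scale1r !addr0.
by move/(congr1 (fun t => t - S 0)); rewrite addrK subrr.
Qed.
Lemma shiftZ c g : S (c *: g) = c *: S g.
Proof. by rewrite -[c *: g]addr0 (sa_shift_linear SA) shift0 addr0. Qed.
Lemma shiftD f g : S (f + g) = S f + S g.
Proof. by rewrite -[f]scale1r (sa_shift_linear SA) !scale1r. Qed.
Lemma shiftB f g : S (f - g) = S f - S g.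
Proof. by rewrite addrC -scaleN1r (sa_shift_linear SA) scaleN1r addrC. Qed.
Lemma iter_shiftZ k c g : iter k S (c *: g) = c *: iter k S g.
Proof. by elim: k => //= k ->; rewrite shiftZ. Qed.
Lemma shift_sum n (F : nat -> V) : S (\sum_(k < n) F k) = \sum_(k < n) S (F k).
Proof.
elim: n => [|n IH]; first by rewrite !big_ord0 shift0.
by rewrite !big_ord_recr /= shiftD IH.
Qed.

(* Leibniz rule (z g)^{(n+1)}(0) = (n+1) g^{(n)}(0), first for polynomials
   and then, by density, for all g; also (z g)(0) = 0. *)
Lemma shift_kernel0 g : ip (S g) (K 0) = 0.
Proof. by rewrite kernel_derivE /= (sa_shift SA g (sa_zero SA)) mul0r. Qed.

Lemma shift_kernel_poly n g (p : {poly Cx R}) : (forall z, Om z -> ev g z = p.[z]) ->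
  ip (S g) (K n.+1) = n.+1%:R * ip g (K n).
Proof.
move=> gp; rewrite !kernel_derivE.
have Sgp z : Om z -> ev (S g) z = ('X * p).[z].
  by move=> Oz; rewrite (sa_shift SA) // gp // hornerM hornerX.
rewrite (derive1n_open_eq (sa_open SA) Sgp _ (sa_zero SA)).
rewrite (derive1n_open_eq (sa_open SA) gp _ (sa_zero SA)).
rewrite !derive1n_horner0 coefXM /= factS mulrnA -mulr_natl.
by rewrite mulr1 mulr_natl -!mulrnA mulnC.
Qed.

Lemma shift_kernel n g : ip (S g) (K n.+1) = n.+1%:R * ip g (K n).
Proof.
apply/eqP; rewrite -subr_eq0; apply/eqP.
pose Phi g := ip (S g) (K n.+1) - n.+1%:R * ip g (K n).
have [M HM] := sa_shift_bounded SA.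
pose C := M * hnorm ip (K n.+1) + Normc.normc (n.+1%:R : Cx R) * hnorm ip (K n).
apply: (bounded_functional_closure (Phi := Phi) (C := C) _ _ _ (sa_poly_dense SA g)).
- by move=> a u w; rewrite /Phi (sa_shift_linear SA) !(ipDZl ip_inner); ring.
- move=> u; apply: le_trans (normcB_le _ _) _; rewrite Normc.normcM /C.
  rewrite [_ * hnorm ip u]mulrDl -mulrA [_ * hnorm ip u]mulrC mulrA.
  rewrite -[X in _ <= _ + X]mulrA [hnorm ip (K n) * _]mulrC.
  apply: lerD.
    apply: le_trans (cauchy_schwarz ip_inner _ _) _.
    by rewrite ler_wpM2r ?hnorm_ge0.
  by rewrite ler_wpM2l ?normc_ge0 // cauchy_schwarz.
- by move=> u [p Hp]; rewrite /Phi (shift_kernel_poly n Hp) subrr.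
Qed.

Definition vanishes_to m g := forall j, (j < m)%N -> ip g (K j) = 0.

Lemma vanishes_to_shift m g : vanishes_to m g -> vanishes_to m.+1 (S g).
Proof. by move=> Hg [|j] lt; rewrite ?shift_kernel0 // shift_kernel Hg ?mulr0. Qed.

Lemma vanishes_to_iter m k g : vanishes_to m g -> vanishes_to (m + k) (iter k S g).
Proof.
elim: k => [|k IH]; first by rewrite addn0.
by move=> /IH h; rewrite addnS; apply: vanishes_to_shift.
Qed.

Lemma vanishes_to_iter_ip m k g : vanishes_to m g -> (0 < k)%N ->
  ip (iter k S g) (K m) = 0.
Proof. by move=> Hg k0; apply: (@vanishes_to_iter m k g Hg); rewrite -{1}(addn0 m) ltn_add2l. Qed.

Definition orbit_span f := [set g | exists (n : nat) (c : nat -> Cx R),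
                               g = \sum_(k < n) c k *: iter k S f].

Lemma cyclic_subspaceE f : cyclic_subspace ip S f = hclosure ip (orbit_span f).
Proof. by []. Qed.

Lemma orbit_span0 f : orbit_span f 0.
Proof. by exists 0%N, (fun _ => 0); rewrite big_ord0. Qed.

Lemma orbit_span_self f : orbit_span f f.
Proof. by exists 1%N, (fun _ => 1); rewrite big_ord1 scale1r. Qed.

Lemma orbit_span_lin f a u w : orbit_span f u -> orbit_span f w -> orbit_span f (a *: u + w).
Proof.
move=> [n1 [c1 ->]] [n2 [c2 ->]].
pose c' (c : nat -> Cx R) n k := if (k < n)%N then c k else 0.
have widen (c : nat -> Cx R) n : (n <= maxn n1 n2)%N ->
    \sum_(k < n) c k *: iter k S f = \sum_(k < maxn n1 n2) c' c n k *: iter k S f.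
  move=> le; rewrite (big_ord_widen _ (fun k => c k *: iter k S f) le) big_mkcond.
  by apply: eq_bigr => i _; rewrite /c'; case: ifP; rewrite ?scale0r.
exists (maxn n1 n2), (fun k => a * c' c1 n1 k + c' c2 n2 k).
rewrite (widen c1 _ (leq_maxl n1 n2)) (widen c2 _ (leq_maxr n1 n2)).
rewrite scaler_sumr -big_split; apply: eq_bigr => i _.
by rewrite scalerA scalerDl.
Qed.

Lemma orbit_span_shift f u : orbit_span f u -> orbit_span f (S u).
Proof.
move=> [n [c ->]]; exists n.+1, (fun k => if k is k'.+1 then c k' else 0).
rewrite (shift_sum n (fun k => c k *: iter k S f)) big_ord_recl /= scale0r add0r.
by apply: eq_bigr => i _; rewrite shiftZ.
Qed.

Lemma ip_orbit_sum f h n (c : nat -> Cx R) :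
  (forall k, (0 < k)%N -> ip (iter k S f) h = 0) ->
  ip (\sum_(k < n) c k *: iter k S f) h = (\sum_(k < n) c k * ((k : nat) == 0%N)%:R) * ip f h.
Proof.
move=> Hh; rewrite (ip_suml ip_inner) mulr_suml; apply: eq_bigr => [[[|k] lt]] _.
  by rewrite /= mulr1.
by rewrite (Hh k.+1) ?mulr0 /= ?mulr0 ?mul0r.
Qed.

Lemma cyclic_shift f v : cyclic_subspace ip S f v -> cyclic_subspace ip S f (S v).
Proof.
move=> Hv e e0.
have [M HM] := sa_shift_bounded SA.
set M1 := Num.max M 1.
have M1_gt0 : 0 < M1 by rewrite lt_max ltr01 orbT.
have [a Da Ha] := Hv (e / M1) (divr_gt0 e0 M1_gt0).
exists (S a); first exact: orbit_span_shift.
rewrite -shiftB; apply: le_lt_trans (HM _) _.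
apply: le_lt_trans (_ : _ <= M1 * hnorm ip (v - a)) _.
  by rewrite ler_wpM2r ?hnorm_ge0 // le_max lexx.
by rewrite -[X in _ < X](divfK (lt0r_neq0 M1_gt0)) mulrC ltr_pM2r.
Qed.

Lemma cyclic_iter f k v : cyclic_subspace ip S f v -> cyclic_subspace ip S f (iter k S v).
Proof. by move=> H; elim: k => //= k IH; apply: cyclic_shift. Qed.

Lemma vanishes_to_cyclic m f g : vanishes_to m f -> cyclic_subspace ip S f g ->
  vanishes_to m g.
Proof.
move=> Hf Hg j lt; apply: (ip_closure_eq0 ip_inner _ Hg).
move=> _ [n [c ->]]; rewrite (ip_suml ip_inner); apply: big1 => i _.
by rewrite (@vanishes_to_iter m i f Hf) ?mulr0 // (leq_trans lt) ?leq_addr.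
Qed.

Lemma cyclic_proj f x :
  is_proj ip (cyclic_subspace ip S f) x (hproj ip (cyclic_subspace ip S f) x).
Proof.
apply: xgetPex; rewrite cyclic_subspaceE.
exact: (projection_exists ip_inner (sa_complete SA) x (orbit_span0 f) (@orbit_span_lin f)).
Qed.

Section ProjectedKernel.
Variables (f : V) (d : nat).
Hypothesis ord_d : is_ord0 (ev f) d.
Let P := hproj ip (cyclic_subspace ip S f) (K d).

Lemma proj_kernel_ip v : cyclic_subspace ip S f v -> ip v P = ip v (K d).
Proof. exact/is_proj_ip/cyclic_proj. Qed.

Lemma proj_kernel_f : ip f P = derive1n d (ev f) 0.
Proof. by rewrite proj_kernel_ip ?kernel_derivE //; apply/(subset_hclosure ip_inner)/orbit_span_self. Qed.

Lemma proj_kernel_inner : H_inner ip S P.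
Proof.
have [L_neq0 L_lt] := ord_d.
have P_cyc : cyclic_subspace ip S f P by case: (cyclic_proj f (K d)).
split.
  by move=> P0; move: L_neq0; rewrite -proj_kernel_f P0 (ip0r ip_inner) eqxx.
move=> k k_ge1.
have P_van : vanishes_to d P.
  by apply: vanishes_to_cyclic P_cyc => j lt; rewrite kernel_derivE L_lt.
rewrite (ipC ip_inner) proj_kernel_ip; last exact: cyclic_iter.
by rewrite (vanishes_to_iter_ip P_van k_ge1) conjC0.
Qed.

(* If f is H-inner, f = beta P: w = f - beta P is orthogonal to [f], which
   contains f and P, so <w, w> = 0. *)
Lemma inner_multiple_of_proj : f <> 0 -> H_inner ip S f ->
  exists c : Cx R, c != 0 /\ f = c *: P.
Proof.
move=> f_neq0 [_ f_inner].
have [L_neq0 L_lt] := ord_d; set L := derive1n d (ev f) 0 in L_neq0 L_lt.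
have f_van : vanishes_to d f by move=> j lt; rewrite kernel_derivE L_lt.
have ff_neq0 : ip f f != 0 by apply: contra_not_neq f_neq0; apply: ip_eq0.
set beta := (ip f f / L)^*; set w := f - beta *: P.
have orth_w v : cyclic_subspace ip S f v -> ip v w = 0.
  apply: ip_closure_eq0 => // _ [n [c ->]].
  have v_cyc : cyclic_subspace ip S f (\sum_(k < n) c k *: iter k S f).
    by apply: (subset_hclosure ip_inner); exists n, c.
  rewrite (ipBr ip_inner) (ipZr ip_inner) conjCK proj_kernel_ip //.
  rewrite (ip_orbit_sum _ _ (fun k k0 => vanishes_to_iter_ip f_van k0)).
  rewrite ip_orbit_sum => [|k k0]; last by rewrite (ipC ip_inner) f_inner ?conjC0.
  by rewrite kernel_derivE -/L; field.
have P_cyc : cyclic_subspace ip S f P by case: (cyclic_proj f (K d)).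
have f_cyc : cyclic_subspace ip S f f by apply/(subset_hclosure ip_inner)/orbit_span_self.
have w0 : w = 0.
  by apply: (ip_eq0 ip_inner); rewrite {1}/w (ipBl ip_inner) (ipZl ip_inner) !orth_w // mulr0 subrr.
exists beta; split; first by rewrite conjC_eq0 mulf_neq0 ?invr_neq0.
by move/eqP: w0; rewrite subr_eq0 => /eqP.
Qed.
End ProjectedKernel.
End StandingAssumptions.

Lemma H_innerZ (R : realType) (V : lmodType (Cx R)) (ip : V -> V -> Cx R) (S : V -> V)
    (g : V) (c : Cx R) :
  is_inner_product ip -> (forall k, iter k S (c *: g) = c *: iter k S g) ->
  H_inner ip S g -> c *: g <> 0 -> H_inner ip S (c *: g).
Proof.
move=> ip_inner iterZ [_ g_inner] cg0; split=> // k k1.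
by rewrite iterZ (ipZl ip_inner) (ipZr ip_inner) g_inner ?mulr0.
Qed.

Theorem mainTheorem1 (R : realType) (Om : set (Cx R)) (V : lmodType (Cx R))
    (ip : V -> V -> Cx R) (ev : V -> Cx R -> Cx R) (S : V -> V) :
  standing_assumptions Om ip ev S ->
  forall (f : V) (d : nat), f <> 0 -> is_ord0 (ev f) d ->
    (H_inner ip S f <->
       exists c : Cx R, c != 0 /\
         f = c *: hproj ip (cyclic_subspace ip S f) (kernel_deriv ip ev 0 d)) /\
    H_inner ip S (hproj ip (cyclic_subspace ip S f) (kernel_deriv ip ev 0 d)).
Proof.
move=> SA f d f_neq0 ord_d.
have P_inner := proj_kernel_inner SA ord_d.
split=> //; split=> [f_inner | [c [_ f_eq]]].
  exact: (inner_multiple_of_proj SA ord_d f_neq0 f_inner).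
rewrite {1}f_eq; apply: (H_innerZ (sa_inner SA) (fun k => iter_shiftZ SA k c _) P_inner).
by rewrite -f_eq.
Qed.
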